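(* Let $\mathcal C$ be an additive strict symmetric monoidal category and let $(L,\ell)$ be a Lie algebra in $\mathcal C$. If $L$ is derived nilpotent, then $L$ is solvable.
   Context: Standing conventions: $\mathcal C$ is an additive symmetric monoidal category (taken strict), with symmetric braiding $c$ (so $c_{V,U}\circ c_{U,V}=\mathrm{id}_{U\otimes V}$); the tensor product is additive in each argument. For an object $U$ put $c^{(n)}_U := c_{U^{\otimes(n-1)},U}\in\mathrm{End}(U^{\otimes n})$. For $h\in\mathrm{Hom}(U\otimes U,U)$ put $h^{(2)}:=h$ and $h^{(n)}:=h\circ(\mathrm{id}_U\otimes h^{(n-1)})\in\mathrm{Hom}(U^{\otimes n},U)$ for $n>2$. A Lie algebra in $\mathcal C$ is a pair $(L,\ell)$ with $\ell\in\mathrm{Hom}(L\otimes L,L)$ satisfying antisymmetry $\ell\circ(\mathrm{id}_{L\otimes L}+c_{L,L})=0$ and the Jacobi identity $\ell^{(3)}\circ[\mathrm{id}_{L^{\otimes 3}}+c^{(3)}_L+(c^{(3)}_L)^2]=0$. Define $\ell^{[2]}:=\ell$ and $\ell^{[n]}:=\ell\circ(\ell^{[n-1]}\otimes\ell^{[n-1]})\in\mathrm{Hom}(L^{\otimes 2^{n-1}},L)$ for $n>2$. $L$ is solvable iff $\ell^{[n]}=0$ for sufficiently large $n$; $L$ is derived nilpotent iff $\ell^{(n)}\circ\ell^{\otimes n}=0$ for sufficiently large $n$. *)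

From HB Require Import structures.
From mathcomp Require Import all_boot all_order all_algebra.
Set Implicit Arguments. Unset Strict Implicit. Unset Printing Implicit Defensive.
Import GRing.Theory.
Local Open Scope ring_scope.

(* Transport of an identity along an equality of objects (used to express
   strictness: e.g. U (x) (V (x) W) = (U (x) V) (x) W as objects). *)
Definition castH (T : Type) (H : T -> T -> Type) (i : forall X, H X X)
  (X Y : T) (e : X = Y) : H X Y :=
  match e in _ = Y0 return H X Y0 with erefl => i X end.
Arguments castH {T} H i {X Y} e.

Record AddStrictSymMonCat := {
  Obj : Type;
  Mor : Obj -> Obj -> zmodType;
  idm : forall U, Mor U U;
  mcomp : forall U V W, Mor V W -> Mor U V -> Mor U W;
  comp_assoc : forall U V W X (f : Mor W X) (g : Mor V W) (h : Mor U V),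
      mcomp f (mcomp g h) = mcomp (mcomp f g) h;
  comp_idl : forall U V (f : Mor U V), mcomp (idm V) f = f;
  comp_idr : forall U V (f : Mor U V), mcomp f (idm U) = f;
  comp_addl : forall U V W (f f' : Mor V W) (g : Mor U V),
      mcomp (f + f') g = mcomp f g + mcomp f' g;
  comp_addr : forall U V W (f : Mor V W) (g g' : Mor U V),
      mcomp f (g + g') = mcomp f g + mcomp f g';
  zob : Obj;
  zob_id : idm zob = 0;
  bprod : Obj -> Obj -> Obj;
  bin1 : forall U V, Mor U (bprod U V);
  bin2 : forall U V, Mor V (bprod U V);
  bpr1 : forall U V, Mor (bprod U V) U;
  bpr2 : forall U V, Mor (bprod U V) V;
  bp11 : forall U V, mcomp (bpr1 U V) (bin1 U V) = idm U;
  bp22 : forall U V, mcomp (bpr2 U V) (bin2 U V) = idm V;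
  bp12 : forall U V, mcomp (bpr1 U V) (bin2 U V) = 0;
  bp21 : forall U V, mcomp (bpr2 U V) (bin1 U V) = 0;
  bpsum : forall U V,
      mcomp (bin1 U V) (bpr1 U V) + mcomp (bin2 U V) (bpr2 U V) = idm (bprod U V);
  tens : Obj -> Obj -> Obj;
  unitO : Obj;
  tensm : forall U U' V V', Mor U U' -> Mor V V' -> Mor (tens U V) (tens U' V');
  tensm_id : forall U V, tensm (idm U) (idm V) = idm (tens U V);
  tensm_comp : forall U U' U'' V V' V'' (f : Mor U' U'') (f' : Mor U U')
      (g : Mor V' V'') (g' : Mor V V'),
      tensm (mcomp f f') (mcomp g g') = mcomp (tensm f g) (tensm f' g');
  tensm_addl : forall U U' V V' (f f' : Mor U U') (g : Mor V V'),
      tensm (f + f') g = tensm f g + tensm f' g;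
  tensm_addr : forall U U' V V' (f : Mor U U') (g g' : Mor V V'),
      tensm f (g + g') = tensm f g + tensm f g';
  tassoc : forall U V W, tens U (tens V W) = tens (tens U V) W;
  tunitl : forall U, tens unitO U = U;
  tunitr : forall U, tens U unitO = U;
  tensm_assoc : forall U U' V V' W W' (f : Mor U U') (g : Mor V V') (h : Mor W W'),
      mcomp (castH (fun X Y => Mor X Y) idm (tassoc U' V' W')) (tensm f (tensm g h))
      = mcomp (tensm (tensm f g) h) (castH (fun X Y => Mor X Y) idm (tassoc U V W));
  tensm_unitl : forall U V (f : Mor U V),
      mcomp (castH (fun X Y => Mor X Y) idm (tunitl V)) (tensm (idm unitO) f)
      = mcomp f (castH (fun X Y => Mor X Y) idm (tunitl U));
  tensm_unitr : forall U V (f : Mor U V),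
      mcomp (castH (fun X Y => Mor X Y) idm (tunitr V)) (tensm f (idm unitO))
      = mcomp f (castH (fun X Y => Mor X Y) idm (tunitr U));
  braid : forall U V, Mor (tens U V) (tens V U);
  braid_nat : forall U U' V V' (f : Mor U U') (g : Mor V V'),
      mcomp (braid U' V') (tensm f g) = mcomp (tensm g f) (braid U V);
  braid_sym : forall U V, mcomp (braid V U) (braid U V) = idm (tens U V);
  braid_hex : forall U V W,
      braid (tens U V) W =
      mcomp (castH (fun X Y => Mor X Y) idm (esym (tassoc W U V)))
      (mcomp (tensm (braid U W) (idm V))
      (mcomp (castH (fun X Y => Mor X Y) idm (tassoc U W V))
      (mcomp (tensm (idm U) (braid V W))
            (castH (fun X Y => Mor X Y) idm (esym (tassoc U V W))))))
}.

Arguments Obj : clear implicits.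
Arguments Mor : clear implicits.
Arguments idm {_} U.
Arguments mcomp {_ U V W} f g.
Arguments tens {_} U V.
Arguments tensm {_ U U' V V'} f g.
Arguments braid {_} U V.
Arguments tassoc {_} U V W.

Section LieDefs.
Variable C : AddStrictSymMonCat.

(* tpow U k = U^{(x)(k+1)} = U (x) (U (x) ( ... (x) U)) *)
Fixpoint tpow (U : Obj C) (k : nat) : Obj C :=
  match k with 0 => U | k'.+1 => tens U (tpow U k') end.

Fixpoint mpow (U V : Obj C) (f : Mor C U V) (k : nat) : Mor C (tpow U k) (tpow V k) :=
  match k with 0 => f | k'.+1 => tensm f (mpow f k') end.

(* hpow h k = h^{(k+2)} : U^{(x)(k+2)} -> U, with h^{(2)} = h and
   h^{(n)} = h o (id (x) h^{(n-1)}). *)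
Fixpoint hpow (U : Obj C) (h : Mor C (tens U U) U) (k : nat) : Mor C (tpow U k.+1) U :=
  match k with 0 => h | k'.+1 => mcomp h (tensm (idm U) (hpow h k')) end.

(* c^{(3)}_U = c_{U^{(x)2},U} in End(U^{(x)3}) (precomposed with the strict
   identification U (x) (U (x) U) = (U (x) U) (x) U). *)
Definition cyc3 (U : Obj C) : Mor C (tpow U 2) (tpow U 2) :=
  mcomp (braid (tens U U) U) (castH (fun X Y => Mor C X Y) (@idm C) (tassoc U U U)).

Definition is_Lie (L : Obj C) (l : Mor C (tens L L) L) : Prop :=
  mcomp l (idm (tens L L) + braid L L) = 0 /\
  mcomp (hpow l 1) (idm (tpow L 2) + cyc3 L + mcomp (cyc3 L) (cyc3 L)) = 0.

Fixpoint bdom (L : Obj C) (k : nat) : Obj C :=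
  match k with 0 => tens L L | k'.+1 => tens (bdom L k') (bdom L k') end.

(* lbr l k = l^{[k+2]} *)
Fixpoint lbr (L : Obj C) (l : Mor C (tens L L) L) (k : nat) : Mor C (bdom L k) L :=
  match k with 0 => l | k'.+1 => mcomp l (tensm (lbr l k') (lbr l k')) end.

Definition solvable_Lie (L : Obj C) (l : Mor C (tens L L) L) : Prop :=
  exists N : nat, forall k : nat, (N <= k)%N -> lbr l k = 0.

(* derived nilpotent: l^{(n)} o l^{(x) n} = 0 for all sufficiently large n
   (index k corresponds to n = k+2) *)
Definition derived_nilpotent (L : Obj C) (l : Mor C (tens L L) L) : Prop :=
  exists N : nat, forall k : nat, (N <= k)%N -> mcomp (hpow l k) (mpow l k.+1) = 0.

End LieDefs.

From HB Require Import structures.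
From mathcomp Require Import all_boot all_order all_algebra.
From mathcomp Require Import zify.
Set Implicit Arguments. Unset Strict Implicit. Unset Printing Implicit Defensive.
Import GRing.Theory.
Local Open Scope ring_scope.

(* Work with generalized elements x : A -> L of L and their brackets
   [x, y] = l o (x (x) y) : A (x) B -> L.  Let G_n be the (n+1)-th term of the
   lower central series of L' = [L, L]: the morphisms that are sums of
   composites of the right-normed bracket [[x0,y0],[[x1,y1],...,[xn,yn]]].
   Derived nilpotence says exactly that G_n = 0 for n large.  Using
   anticommutativity and the Jacobi identity one shows, as for ordinary Lie
   algebras, that [G_a, G_b] is contained in G_(a+b+1); since l lies in G_0,
   induction gives l^[k+2] in G_(2^k - 1), which vanishes for k large. *)

Section Additive.
Variable C : AddStrictSymMonCat.

Lemma comp0r (U V W : Obj C) (f : Mor C V W) : mcomp f (0 : Mor C U V) = 0.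
Proof. by apply: (@addrI _ (mcomp f 0)); rewrite -comp_addr !addr0. Qed.

Lemma comp0l (U V W : Obj C) (g : Mor C U V) : mcomp (0 : Mor C V W) g = 0.
Proof. by apply: (@addrI _ (mcomp 0 g)); rewrite -comp_addl !addr0. Qed.

Lemma compNr (U V W : Obj C) (f : Mor C V W) (g : Mor C U V) :
  mcomp f (- g) = - mcomp f g.
Proof. by apply/eqP; rewrite -addr_eq0 -comp_addr addNr comp0r. Qed.

Definition cycle3 (A B D : Obj C) : Mor C (tens A (tens B D)) (tens D (tens A B)) :=
  mcomp (braid (tens A B) D) (castH (fun X Y => Mor C X Y) (@idm C) (tassoc A B D)).

Lemma cyc3_nat (L A B D : Obj C) (x : Mor C A L) (y : Mor C B L) (z : Mor C D L) :
  mcomp (cyc3 L) (tensm x (tensm y z)) = mcomp (tensm z (tensm x y)) (cycle3 A B D).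
Proof.
by rewrite /cyc3 /cycle3 -comp_assoc tensm_assoc comp_assoc braid_nat -comp_assoc.
Qed.

End Additive.

Section LieBracket.
Variables (C : AddStrictSymMonCat) (L : Obj C) (l : Mor C (tens L L) L).

Definition bracket (A B : Obj C) (x : Mor C A L) (y : Mor C B L) : Mor C (tens A B) L :=
  mcomp l (tensm x y).

Lemma bracket_comp (A B A' B' : Obj C) (x : Mor C A L) (y : Mor C B L)
    (f : Mor C A' A) (g : Mor C B' B) :
  bracket (mcomp x f) (mcomp y g) = mcomp (bracket x y) (tensm f g).
Proof. by rewrite /bracket -comp_assoc -tensm_comp. Qed.

Lemma bracketDr (A B : Obj C) (x : Mor C A L) (y y' : Mor C B L) :
  bracket x (y + y') = bracket x y + bracket x y'.
Proof. by rewrite /bracket tensm_addr comp_addr. Qed.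

Fixpoint nested_bracket (n : nat) : Mor C (tpow (tens L L) n) L :=
  if n is n'.+1 then bracket l (nested_bracket n') else l.

Lemma nested_bracket_hpow n :
  nested_bracket n.+1 = mcomp (hpow l n) (mpow l n.+1).
Proof.
elim: n => [|n IH] //.
by rewrite -[nested_bracket n.+2]/(bracket l (nested_bracket n.+1)) IH /bracket /=
  -comp_assoc -tensm_comp comp_idl.
Qed.

(* [lcs_derived n f] says that f lies in G_n. *)
Inductive lcs_derived : nat -> forall X : Obj C, Mor C X L -> Prop :=
| lcs_nested n X (g : Mor C X (tpow (tens L L) n)) :
    lcs_derived n (mcomp (nested_bracket n) g)
| lcs_add n X (f1 f2 : Mor C X L) :
    lcs_derived n f1 -> lcs_derived n f2 -> lcs_derived n (f1 + f2).

Lemma lcs_comp n X (f : Mor C X L) :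
  lcs_derived n f -> forall Y (h : Mor C Y X), lcs_derived n (mcomp f h).
Proof.
elim=> {n X f} [n X g|n X f1 f2 _ IH1 _ IH2] Y h.
  by rewrite -comp_assoc; apply: lcs_nested.
by rewrite comp_addl; apply: lcs_add.
Qed.

Lemma lcs_opp n X (f : Mor C X L) : lcs_derived n f -> lcs_derived n (- f).
Proof. by move/lcs_comp/(_ _ (- idm X)); rewrite compNr comp_idr. Qed.

Lemma lcs_bracketl n X (f : Mor C X L) :
  lcs_derived n f -> lcs_derived n.+1 (bracket l f).
Proof.
elim=> {n X f} [n X g|n X f1 f2 _ IH1 _ IH2].
  by rewrite -{1}[l]comp_idr bracket_comp; apply: lcs_nested.
by rewrite bracketDr; apply: lcs_add.
Qed.

Lemma lcs_vanish N :
  (forall k, (N <= k)%N -> mcomp (hpow l k) (mpow l k.+1) = 0) ->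
  forall n X (f : Mor C X L), lcs_derived n f -> (N < n)%N -> f = 0.
Proof.
move=> HN n X f; elim=> {n X f} [[|n] X g|n X f1 f2 _ IH1 _ IH2] Hn //.
  by rewrite nested_bracket_hpow HN // comp0l.
by rewrite IH1 // IH2 // addr0.
Qed.

Section Lie.
Hypothesis l_anti : mcomp l (idm (tens L L) + braid L L) = 0.
Hypothesis l_jacobi :
  mcomp (hpow l 1) (idm (tpow L 2) + cyc3 L + mcomp (cyc3 L) (cyc3 L)) = 0.

Lemma bracketC (A B : Obj C) (x : Mor C A L) (y : Mor C B L) :
  bracket x y = - mcomp (bracket y x) (braid A B).
Proof.
have := congr1 (mcomp^~ (tensm x y)) l_anti.
rewrite comp0l comp_addr comp_idr comp_addl -comp_assoc braid_nat comp_assoc.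
by move/eqP; rewrite addr_eq0 => /eqP.
Qed.

Lemma bracket_jacobi (A B D : Obj C) (x : Mor C A L) (y : Mor C B L) (z : Mor C D L) :
  bracket x (bracket y z) + mcomp (bracket z (bracket x y)) (cycle3 A B D)
  + mcomp (bracket y (bracket z x)) (mcomp (cycle3 D A B) (cycle3 A B D)) = 0.
Proof.
have hpow1E A' B' D' (x' : Mor C A' L) (y' : Mor C B' L) (z' : Mor C D' L) :
    mcomp (hpow l 1) (tensm x' (tensm y' z')) = bracket x' (bracket y' z').
  by rewrite /= /bracket -comp_assoc -tensm_comp comp_idl.
have H : mcomp (mcomp (hpow l 1)
    (idm (tpow L 2) + cyc3 L + mcomp (cyc3 L) (cyc3 L))) (tensm x (tensm y z)) = 0.
  by rewrite l_jacobi comp0l.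
rewrite -comp_assoc !comp_addl comp_idl -comp_assoc !cyc3_nat !comp_addr in H.
rewrite [mcomp (cyc3 L) _]comp_assoc cyc3_nat !comp_assoc !hpow1E in H.
by rewrite /cycle3 !comp_assoc.
Qed.

Lemma lcs_bracketC n (A B : Obj C) (x : Mor C A L) (y : Mor C B L) :
  lcs_derived n (bracket y x) -> lcs_derived n (bracket x y).
Proof. by move=> H; rewrite bracketC; apply/lcs_opp/lcs_comp. Qed.

Lemma lcs_bracketr n X (f : Mor C X L) :
  lcs_derived n f -> lcs_derived n.+1 (bracket f l).
Proof. by move=> Hf; apply/lcs_bracketC/lcs_bracketl. Qed.

Lemma lcs_bracket_nested b : forall a X (f : Mor C X L),
  lcs_derived a f -> lcs_derived (a + b).+1 (bracket f (nested_bracket b)).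
Proof.
elim: b => [|b IH] a X f Hf; first by rewrite addn0; apply: lcs_bracketr.
set R := nested_bracket b.
have jacobiE : bracket f (bracket l R) =
    - mcomp (bracket R (bracket f l)) (cycle3 X (tens L L) (tpow (tens L L) b))
    - mcomp (bracket l (bracket R f))
        (mcomp (cycle3 (tpow (tens L L) b) X (tens L L))
               (cycle3 X (tens L L) (tpow (tens L L) b))).
  by move/eqP: (bracket_jacobi f l R); rewrite -addrA addr_eq0 opprD => /eqP.
rewrite /= jacobiE; apply: lcs_add; apply/lcs_opp/lcs_comp.
  by rewrite addnS -addSn; apply/lcs_bracketC/IH/lcs_bracketr.
by rewrite addnS; apply/lcs_bracketl/lcs_bracketC/IH.
Qed.

Lemma lcs_bracket b Y (g : Mor C Y L) : lcs_derived b g ->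
  forall a X (f : Mor C X L), lcs_derived a f -> lcs_derived (a + b).+1 (bracket f g).
Proof.
elim=> {b Y g} [b Y g|b Y g1 g2 _ IH1 _ IH2] a X f Hf.
  by rewrite -[f]comp_idr bracket_comp; apply/lcs_comp/lcs_bracket_nested.
by rewrite bracketDr; apply: lcs_add; [apply: IH1 | apply: IH2].
Qed.

Lemma lbr_lcs k : lcs_derived (2 ^ k).-1 (lbr l k).
Proof.
elim: k => [|k IH]; first by rewrite -[lbr l 0]comp_idr; apply: lcs_nested.
have -> : (2 ^ k.+1).-1 = ((2 ^ k).-1 + (2 ^ k).-1).+1.
  by have := expn_gt0 2 k; rewrite expnS; lia.
exact: lcs_bracket.
Qed.

End Lie.
End LieBracket.

Theorem mainTheorem1 (C : AddStrictSymMonCat) (L : Obj C) (l : Mor C (tens L L) L) :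
  is_Lie l -> derived_nilpotent l -> solvable_Lie l.
Proof.
move=> [l_anti l_jacobi] [N HN]; exists N.+1 => k Hk.
apply: (lcs_vanish HN (lbr_lcs l_anti l_jacobi k)).
by have := ltn_expl k (isT : (1 < 2)%N); lia.
Qed.
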